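(* Let $W(x,y,z)\in F(x,y,z)$ be one of the words $yx^{-1}y$, $y^{-s}xy^{s}$, $yz^{-s}y^{-1}xz^{s}$, $yz^{-s}xy^{-1}z^{s}$, $z^{-s}y^{-1}xz^{s}y$, $z^{-s}xy^{-1}z^{s}y$, where $s\in\mathbb{Z}$. Then for every group $G$ and every element $c\in G$, the algebraic system $(G,*_{W,c})$ is a quandle.
   Context: A quandle is a set $Q$ with a binary operation $(x,y)\mapsto x*y$ satisfying: (q1) $x*x=x$ for all $x\in Q$; (q2) for every $x\in Q$ the map $y\mapsto y*x$ is a bijection of $Q$; (q3) $(x*y)*z=(x*z)*(y*z)$ for all $x,y,z\in Q$. For a word $W(x,y,z)$ in the free group $F(x,y,z)$, a group $G$ and a fixed element $c\in G$, the binary operation $*_{W,c}$ on $G$ is defined by $a*_{W,c}b=W(a,b,c)$ (substitute $a$ for $x$, $b$ for $y$, $c$ for $z$ and evaluate in $G$). *)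

From mathcomp Require Import all_boot all_algebra.
Set Implicit Arguments. Unset Strict Implicit. Unset Printing Implicit Defensive.

Record AGroup := {
  gcar :> Type;
  gmul : gcar -> gcar -> gcar;
  gone : gcar;
  ginv : gcar -> gcar;
  gmulA : forall a b c, gmul a (gmul b c) = gmul (gmul a b) c;
  gmul1g : forall a, gmul gone a = a;
  gmulVg : forall a, gmul (ginv a) a = gone
}.

Inductive word : Type :=
| Wx | Wy | Wz | Wone
| Wmul of word & word
| Winv of word.

Fixpoint wpown (w : word) (n : nat) : word :=
  match n with 0 => Wone | n'.+1 => Wmul w (wpown w n') end.

Definition wpow (w : word) (s : int) : word :=
  match s with
  | Posz n => wpown w n
  | Negz n => Winv (wpown w n.+1)
  end.

Fixpoint weval (G : AGroup) (a b c : G) (w : word) : G :=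
  match w with
  | Wx => a | Wy => b | Wz => c | Wone => gone G
  | Wmul u v => gmul (weval a b c u) (weval a b c v)
  | Winv u => ginv (weval a b c u)
  end.

Definition wop (W : word) (G : AGroup) (c : G) : G -> G -> G :=
  fun a b => weval a b c W.

Definition is_quandle (Q : Type) (op : Q -> Q -> Q) : Prop :=
  (forall x, op x x = x) /\
  (forall x, bijective (fun y => op y x)) /\
  (forall x y z, op (op x y) z = op (op x z) (op y z)).

Notation "u ** v" := (Wmul u v) (at level 40, left associativity).

Definition qW1 : word := Wy ** Winv Wx ** Wy.
Definition qW2 (s : int) : word := wpow Wy (- s)%R ** Wx ** wpow Wy s.
Definition qW3 (s : int) : word :=
  Wy ** wpow Wz (- s)%R ** Winv Wy ** Wx ** wpow Wz s.
Definition qW4 (s : int) : word :=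
  Wy ** wpow Wz (- s)%R ** Wx ** Winv Wy ** wpow Wz s.
Definition qW5 (s : int) : word :=
  wpow Wz (- s)%R ** Winv Wy ** Wx ** wpow Wz s ** Wy.
Definition qW6 (s : int) : word :=
  wpow Wz (- s)%R ** Wx ** Winv Wy ** wpow Wz s ** Wy.

(* With t := c^s, the six operations a * b read b a^-1 b (the core quandle),
   b^-s a b^s (conjugation by a power of b), and b phi(b^-1 a), b phi(a b^-1),
   phi(b^-1 a) b, phi(a b^-1) b for the inner automorphism phi g := t^-1 g t.
   Each of the last four is a quandle for an arbitrary automorphism phi:
   idempotency holds as phi 1 = 1, right translations are inverted by
   replacing phi with its inverse, and both sides of self-distributivity
   expand to the same product of the arguments and their images under phi
   and phi^2. *)

From mathcomp Require Import all_boot all_algebra.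

Set Implicit Arguments.
Unset Strict Implicit.
Unset Printing Implicit Defensive.

Section GroupTheory.
Context {G : AGroup}.
Local Notation "a * b" := (gmul a b).
Local Notation "a ^-1" := (ginv a).
Local Notation "1" := (gone G).
Implicit Types a b g h k t : G.

Lemma gmulAr a b k : (a * b) * k = a * (b * k).
Proof. by rewrite gmulA. Qed.

Lemma gmulKV a b : a^-1 * (a * b) = b.
Proof. by rewrite gmulA gmulVg gmul1g. Qed.

Lemma gmulgV a : a * a^-1 = 1.
Proof. by rewrite -[LHS]gmul1g -{1}(gmulVg a^-1) gmulAr (gmulKV a) gmulVg. Qed.

Lemma gmulg1 a : a * 1 = a.
Proof. by rewrite -(gmulVg a) gmulA gmulgV gmul1g. Qed.

Lemma ginvK a : a^-1^-1 = a.
Proof. by rewrite -[LHS]gmulg1 -(gmulVg a) gmulA gmulVg gmul1g. Qed.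

Lemma gmulVK a b : a * (a^-1 * b) = b.
Proof. by rewrite gmulA gmulgV gmul1g. Qed.

Lemma ginvM a b : (a * b)^-1 = b^-1 * a^-1.
Proof.
have prod_inv : (a * b) * (b^-1 * a^-1) = 1 by rewrite gmulAr gmulVK gmulgV.
by rewrite -[LHS]gmulg1 -prod_inv gmulKV.
Qed.

Lemma ginv1 : 1^-1 = 1.
Proof. by rewrite -[LHS]gmul1g gmulgV. Qed.

Lemma gmul_commV a b : a * b = b * a -> a * b^-1 = b^-1 * a.
Proof.
move=> ab; rewrite -[RHS]gmulg1 -(gmulgV b) gmulA.
by rewrite -[_ * a * b]gmulA ab gmulKV.
Qed.

Lemma gmorphV (f : G -> G) : (forall a b, f (a * b) = f a * f b) ->
  forall a, f a^-1 = (f a)^-1.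
Proof.
move=> fM a; have f1 : f 1 = 1.
  by rewrite -[RHS](gmulVg (f 1)) -{3}(gmul1g 1) fM gmulKV.
by rewrite -[LHS]gmulg1 -(gmulgV (f a)) gmulA -fM gmulVg f1 gmul1g.
Qed.

Fixpoint gpown g n : G := if n is n'.+1 then g * gpown g n' else 1.

Definition gpow g (s : int) : G :=
  match s with Posz n => gpown g n | Negz n => (gpown g n.+1)^-1 end.

Lemma gpowN g s : gpow g (- s)%R = (gpow g s)^-1.
Proof. by case: s => [[|n]|n] /=; rewrite ?ginv1 ?ginvK. Qed.

Definition gconj t g := t^-1 * g * t.

Lemma gpown_conj k h n : gpown (gconj k h) n = gconj k (gpown h n).
Proof.
rewrite /gconj; elim: n => /= [|n ->]; first by rewrite gmulg1 gmulVg.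
by rewrite !gmulAr gmulVK.
Qed.

Lemma gpow_conj k h s : gpow (gconj k h) s = gconj k (gpow h s).
Proof.
case: s => n; rewrite /gpow gpown_conj //.
by rewrite /gconj !ginvM ginvK !gmulAr.
Qed.

Lemma gpow_comm g s : g * gpow g s = gpow g s * g.
Proof.
have gpown_comm n : g * gpown g n = gpown g n * g.
  by elim: n => /= [|n IH]; rewrite ?gmulg1 ?gmul1g // gmulAr IH.
by case: s => n; [exact: gpown_comm | exact: gmul_commV (gpown_comm n.+1)].
Qed.

Lemma gconjM t a b : gconj t (a * b) = gconj t a * gconj t b.
Proof. by rewrite /gconj !gmulAr gmulVK. Qed.

Lemma gconjK t : cancel (gconj t) (gconj t^-1).
Proof. by move=> g; rewrite /gconj ginvK !gmulAr gmulgV gmulg1 gmulVK. Qed.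

Lemma gconjKV t : cancel (gconj t^-1) (gconj t).
Proof. by move=> g; rewrite /gconj ginvK !gmulAr gmulKV gmulVg gmulg1. Qed.

End GroupTheory.

Ltac gsimpl := repeat progress rewrite ?gmulAr ?ginvM ?ginvK ?gmulKV ?gmulVK
  ?gmulgV ?gmulVg ?gmulg1 ?gmul1g ?ginv1.

Lemma is_quandle_ext (Q : Type) (op op' : Q -> Q -> Q) :
  is_quandle op' -> (forall a b, op a b = op' a b) -> is_quandle op.
Proof.
move=> [idem [bij dist]] eq_op.
split; [|split] => [a|a|a b c]; rewrite ?eq_op //.
by have [inv invK Kinv] := bij a; exists inv => b; rewrite eq_op.
Qed.

Section Quandles.
Context {G : AGroup}.
Local Notation "a * b" := (gmul a b).
Local Notation "a ^-1" := (ginv a).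
Local Notation "1" := (gone G).
Implicit Types a b : G.

Lemma core_quandle : is_quandle (fun a b : G => b * a^-1 * b).
Proof.
split; [|split] => [a|b|a b c]; gsimpl => //.
by exists (fun a => b * (a^-1 * b)) => a; gsimpl.
Qed.

Lemma conj_pow_quandle (s : int) :
  is_quandle (fun a b : G => gconj (gpow b s) a).
Proof.
split; [|split] => [a|b|a b c].
- by rewrite /gconj gmulAr gpow_comm gmulKV.
- by exists (gconj (gpow b s)^-1); [exact: gconjK | exact: gconjKV].
- by rewrite gpow_conj /gconj; gsimpl.
Qed.

Variables phi psi : G -> G.
Hypothesis phiM : forall a b, phi (a * b) = phi a * phi b.
Hypotheses (phiK : cancel phi psi) (psiK : cancel psi phi).

Lemma psiM a b : psi (a * b) = psi a * psi b.
Proof. by apply: (can_inj phiK); rewrite phiM !psiK. Qed.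

Let phiV := gmorphV phiM.
Let psiV := gmorphV psiM.

Local Ltac twsimpl :=
  repeat progress (rewrite ?phiM ?psiM ?phiV ?psiV ?phiK ?psiK; gsimpl).

Lemma twisted_quandle_l_Vba : is_quandle (fun a b => b * phi (b^-1 * a)).
Proof.
split; [|split] => [a|b|a b c]; twsimpl => //.
by exists (fun a => b * psi (b^-1 * a)) => a; twsimpl.
Qed.

Lemma twisted_quandle_l_abV : is_quandle (fun a b => b * phi (a * b^-1)).
Proof.
split; [|split] => [a|b|a b c]; twsimpl => //.
by exists (fun a => psi (b^-1 * a) * b) => a; twsimpl.
Qed.

Lemma twisted_quandle_r_Vba : is_quandle (fun a b => phi (b^-1 * a) * b).
Proof.
split; [|split] => [a|b|a b c]; twsimpl => //.
by exists (fun a => b * psi (a * b^-1)) => a; twsimpl.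
Qed.

Lemma twisted_quandle_r_abV : is_quandle (fun a b => phi (a * b^-1) * b).
Proof.
split; [|split] => [a|b|a b c]; twsimpl => //.
by exists (fun a => psi (a * b^-1) * b) => a; twsimpl.
Qed.

End Quandles.

Lemma weval_wpow (G : AGroup) (a b c : G) w s :
  weval a b c (wpow w s) = gpow (weval a b c w) s.
Proof.
have weval_wpown n : weval a b c (wpown w n) = gpown (weval a b c w) n.
  by elim: n => //= n ->.
by case: s => n /=; rewrite weval_wpown.
Qed.

Section SixWords.
Variables (G : AGroup) (c : G) (s : int).
Let t := gpow c s.
Let tM := gconjM t.
Let tK := gconjK t.
Let tKV := gconjKV t.

Local Ltac weval_simpl := rewrite /wop /= ?weval_wpow ?gpowN /gconj; gsimpl.

Lemma quandle_qW1 : is_quandle (wop qW1 c).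
Proof. exact: core_quandle. Qed.

Lemma quandle_qW2 : is_quandle (wop (qW2 s) c).
Proof.
eapply is_quandle_ext; first exact: conj_pow_quandle.
by move=> a b; weval_simpl.
Qed.

Lemma quandle_qW3 : is_quandle (wop (qW3 s) c).
Proof.
eapply is_quandle_ext; first exact: twisted_quandle_l_Vba tM tK tKV.
by move=> a b; weval_simpl.
Qed.

Lemma quandle_qW4 : is_quandle (wop (qW4 s) c).
Proof.
eapply is_quandle_ext; first exact: twisted_quandle_l_abV tM tK tKV.
by move=> a b; weval_simpl.
Qed.

Lemma quandle_qW5 : is_quandle (wop (qW5 s) c).
Proof.
eapply is_quandle_ext; first exact: twisted_quandle_r_Vba tM tK tKV.
by move=> a b; weval_simpl.
Qed.

Lemma quandle_qW6 : is_quandle (wop (qW6 s) c).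
Proof.
eapply is_quandle_ext; first exact: twisted_quandle_r_abV tM tK tKV.
by move=> a b; weval_simpl.
Qed.

End SixWords.

Theorem mainTheorem2 (s : int) (W : word)
  (hW : W = qW1 \/ W = qW2 s \/ W = qW3 s \/ W = qW4 s \/ W = qW5 s \/ W = qW6 s)
  (G : AGroup) (c : G) :
  is_quandle (wop W c).
Proof.
case: hW => [->|[->|[->|[->|[->|->]]]]].
- exact: quandle_qW1.
- exact: quandle_qW2.
- exact: quandle_qW3.
- exact: quandle_qW4.
- exact: quandle_qW5.
- exact: quandle_qW6.
Qed.
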